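(* Fix a prime $p>3$ and an integer $n\ge 2$, and write the base-$p$ expansion $n=\sum_{i=1}^k a_ip^{b_i}$ with $0<a_i\le p-1$ and $0\le b_1<\cdots<b_k$. Then $\prod_{i=1}^k a_i!\,p^{b_i}\le ((p-1)!)^{(n-1)/(p-2)}$. Furthermore, if $a_i=1$ for all $i$, then $\prod_{i=1}^k a_i!\,p^{b_i}\le \tfrac12((p-1)!)^{(n-1)/(p-2)}$. *)

From mathcomp Require Import all_boot.
From Stdlib Require Import Reals.

Definition fact_bound (p n : nat) : R :=
  Rpower (INR (p.-1)`!) ((INR n - 1) / (INR p - 2))%R.

From mathcomp Require Import all_boot.
From mathcomp Require Import zify.

(* Write F = (p-1)! and n = sum_i a_i p^(b_i) with 0 < a_i <= p-1.  Raising the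
   claim to the power p-2 turns it into an inequality between natural numbers,
   which is proved digit by digit:
   - each block satisfies (a! p^b)^(p-2) <= F^(a p^b - 1), combining the
     factorial exchange a!^(m-1) <= m!^(a-1) (for a <= m = p-1), the bound
     p <= F and Bernoulli's inequality 1 + b(p-1) <= p^b;
   - multiplying over the k digits gives P^(p-2) <= F^(n-k) <= F^(n-1);
   - when every digit is 1 the factor 2 is absorbed either by the slack
     F^(k-1) (k >= 2, using 2^(p-2) <= F) or, for n = p^b, directly.
   Finally a p-2-th root is taken in the reals (le_fact_bound). *)

Lemma leq_exp2rW [m n] e : m <= n -> m ^ e <= n ^ e.
Proof. by case: e => [|e] le_mn; rewrite ?expn0 ?leq_exp2r. Qed.

(* a! = 1 * 2 * ... * a has a-1 factors that are at most a+1. *)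
Lemma fact_le_succ_pow a : a`! <= a.+1 ^ a.-1.
Proof.
elim: a => [|a IH] //; rewrite factS /=.
case: a IH => [|a] //= IH; rewrite expnS leq_mul //.
by apply: leq_trans IH _; rewrite leq_exp2rW.
Qed.

(* The d factors of (a+d)!/a! are all at least a+1. *)
Lemma fact_mul_pow_le a d : a`! * a.+1 ^ d <= (a + d)`!.
Proof.
elim: d => [|d IH]; first by rewrite muln1 addn0.
by rewrite addnS factS expnS mulnCA leq_mul // ltnS leq_addr.
Qed.

Lemma fact_pow_exchange a m : 0 < a <= m -> a`! ^ m.-1 <= m`! ^ a.-1.
Proof.
case/andP=> a_gt0 /subnKC <-; set d := m - a.
have -> : (a + d).-1 = a.-1 + d by rewrite -!subn1 addnBAC.
apply: leq_trans (leq_exp2rW a.-1 (fact_mul_pow_le a d)).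
rewrite expnD expnMn leq_mul // -expnM mulnC expnM leq_exp2rW //.
exact: fact_le_succ_pow.
Qed.

Lemma bernoulli_expn [p] b : 0 < p -> 1 + b * p.-1 <= p ^ b.
Proof.
move=> p_gt0; elim: b => [|b IH] //; rewrite expnS.
have : 0 < p ^ b by rewrite expn_gt0 p_gt0.
nia.
Qed.

Lemma two_pow_le_fact m : 2 ^ m <= m.+1`!.
Proof. by elim: m => [|m IH] //; rewrite expnS factS leq_mul. Qed.

(* p <= (p-1)! as soon as p >= 4, since (p-1)! >= (p-1)(p-2) >= 2(p-1). *)
Lemma leq_fact_pred p : 3 < p -> p <= p.-1`!.
Proof.
case: p => [|[|[|[|p]]]] // _; rewrite /= !factS.
have := fact_gt0 p; nia.
Qed.

Section DigitBounds.

Variable p : nat.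
Hypothesis p_gt3 : 3 < p.
Local Notation F := (p.-1)`!.
Let p_gt0 : 0 < p := ltnW (ltnW (ltnW p_gt3)).

Lemma pow_pow_le_fact b : (p ^ b) ^ p.-2 <= F ^ (b * p.-2).
Proof. by rewrite -expnM leq_exp2rW // leq_fact_pred. Qed.

Lemma two_pow_le_fact_pred : 2 ^ p.-2 <= F.
Proof. by rewrite (leq_trans (two_pow_le_fact _)) //; case: p p_gt3 => [|[|[|]]]. Qed.

Lemma digit_term_gt0 a b : 0 < a -> 0 < a * p ^ b.
Proof. by move=> a_gt0; rewrite muln_gt0 a_gt0 expn_gt0 p_gt0. Qed.

Lemma digit_block_bound a b : 0 < a <= p.-1 ->
  (a`! * p ^ b) ^ p.-2 <= F ^ (a * p ^ b - 1).
Proof.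
move=> a_range; have a_gt0 : 0 < a by case/andP: a_range.
have fact_a : a`! ^ p.-2 <= F ^ a.-1 by exact: fact_pow_exchange.
have bern := bernoulli_expn b p_gt0.
have pb_gt0 : 0 < p ^ b by rewrite expn_gt0 p_gt0.
rewrite expnMn (leq_trans (leq_mul fact_a (pow_pow_le_fact b))) //.
rewrite -expnD leq_pexp2l ?fact_gt0 //; nia.
Qed.

Lemma unit_digit_block_bound b : 0 < b -> (2 * p ^ b) ^ p.-2 <= F ^ (p ^ b).-1.
Proof.
move=> b_gt0; have bern := bernoulli_expn b p_gt0.
rewrite expnMn (leq_trans (leq_mul two_pow_le_fact_pred (pow_pow_le_fact b))) //.
rewrite -{1}(expn1 F) -expnD leq_pexp2l ?fact_gt0 //; nia.
Qed.

Lemma digits_prod_bound k (a b : nat -> nat) :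
  (forall i, i < k -> 0 < a i <= p.-1) ->
  (\prod_(i < k) ((a i)`! * p ^ b i)) ^ p.-2 <= F ^ (\sum_(i < k) a i * p ^ b i - k).
Proof.
move=> a_range.
have term_ge1 (i : 'I_k) : 1 <= a i * p ^ b i.
  by case/andP: (a_range i (ltn_ord i)) => ai_gt0 _; exact: digit_term_gt0.
rewrite (big_morph (fun x => x ^ p.-2) (fun x y => expnMn x y _) (exp1n _)).
rewrite -[k in _ - k]card_ord -sum1_card -sumnB // expn_sum.
by apply: leq_prod => i _; apply: digit_block_bound; apply: a_range.
Qed.

Lemma digits_count k (a b : nat -> nat) :
  (forall i, i < k -> 0 < a i) -> k <= \sum_(i < k) a i * p ^ b i.
Proof.
move=> a_gt0; rewrite -[k in k <= _]card_ord -sum1_card; apply: leq_sum => i _.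
by apply/digit_term_gt0/a_gt0.
Qed.

Lemma unit_digits_prod_bound k (a b : nat -> nat) :
  (forall i, i < k -> a i = 1) -> 2 <= \sum_(i < k) a i * p ^ b i ->
  (2 * \prod_(i < k) ((a i)`! * p ^ b i)) ^ p.-2
    <= F ^ (\sum_(i < k) a i * p ^ b i).-1.
Proof.
move=> a1 n_ge2; have a_range i : i < k -> 0 < a i <= p.-1 by move/a1 ->; lia.
have k_le_n : k <= \sum_(i < k) a i * p ^ b i by apply: digits_count => i /a1 ->.
case: k => [|[|k]] in a1 a_range n_ge2 k_le_n *; first by rewrite big_ord0 in n_ge2.
- rewrite !big_ord1 a1 // mul1n in n_ge2 *.
  by apply: unit_digit_block_bound; case: (b ord0) n_ge2.
- rewrite expnMn (leq_trans (leq_mul two_pow_le_fact_pred (digits_prod_bound _ _ b a_range))) //.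
  by rewrite -{1}(expn1 F) -expnD leq_pexp2l ?fact_gt0 //; lia.
Qed.

End DigitBounds.

(* Importing Stdlib's Reals rebinds the nat notation ^ to Nat.pow, which is how
   the theorem statement reads; the arithmetic above uses ssrnat's expn. *)
Lemma nat_pow_expn m e : Nat.pow m e = m ^ e.
Proof. by elim: e => //= e ->; rewrite expnS multE. Qed.

From Stdlib Require Import Reals Lra.

Lemma INR_predn n : 0 < n -> INR n.-1 = (INR n - 1)%R.
Proof. by case: n => // n _; rewrite S_INR /=; lra. Qed.

Lemma le_fact_bound p n Q : 2 < p -> 0 < n -> 0 < Q ->
  expn Q p.-2 <= expn (p.-1)`! n.-1 -> (INR Q <= fact_bound p n)%R.
Proof.
move=> p_gt2 n_gt0 Q_gt0 le_pow.
have pos_INR_lt m : 0 < m -> (0 < INR m)%R by move=> m_gt0; apply/lt_0_INR/ltP.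
have e_gt0 : (0 < INR p.-2)%R by apply: pos_INR_lt; lia.
have Q_pos := pos_INR_lt _ Q_gt0; have F_pos := pos_INR_lt _ (fact_gt0 p.-1).
have real_le_pow : (Rpower (INR Q) (INR p.-2) <= Rpower (INR (p.-1)`!) (INR n.-1))%R.
  by rewrite !Rpower_pow // -!pow_INR !nat_pow_expn; apply/le_INR/leP.
have -> : INR Q = Rpower (Rpower (INR Q) (INR p.-2)) (/ INR p.-2).
  by rewrite Rpower_mult Rinv_r ?Rpower_1 //; lra.
apply: Rle_trans (Rle_Rpower_l _ _ _ _ (conj (exp_pos _) real_le_pow)) _.
  by apply/Rlt_le/Rinv_0_lt_compat.
rewrite Rpower_mult /fact_bound !INR_predn; try lia.
have -> : (INR p - 1 - 1 = INR p - 2)%R by ring.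
exact: Rle_refl.
Qed.

Theorem lemma6p1 (p n k : nat) (a b : nat -> nat) :
  prime p -> 3 < p -> 2 <= n ->
  (forall i, i < k -> 0 < a i <= p.-1) ->
  (forall i j, i < j -> j < k -> b i < b j) ->
  n = \sum_(i < k) a i * p ^ b i ->
  (INR (\prod_(i < k) ((a i)`! * p ^ b i)) <= fact_bound p n)%R /\
  ((forall i, i < k -> a i = 1) ->
     (INR (\prod_(i < k) ((a i)`! * p ^ b i)) <= / 2 * fact_bound p n)%R).
Proof.
move=> _ p_gt3 n_ge2 a_range _ n_digits.
have expn_digits : n = \sum_(i < k) a i * expn p (b i).
  by rewrite {}n_digits; apply: eq_bigr => i _; rewrite nat_pow_expn.
under eq_bigr do rewrite nat_pow_expn.
set P := \prod_(i < k) _.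
have P_gt0 : 0 < P by apply: prodn_gt0 => i; rewrite muln_gt0 fact_gt0 expn_gt0; lia.
have k_gt0 : 0 < k.
  by rewrite lt0n; apply: contraTneq n_ge2 => k0; rewrite expn_digits k0 big_ord0.
split=> [|a1].
  apply: le_fact_bound => //; try lia.
  apply: leq_trans (digits_prod_bound _ p_gt3 _ _ b a_range) _.
  by rewrite -expn_digits leq_pexp2l ?fact_gt0 //; lia.
have -> : INR P = (/ 2 * INR (2 * P))%R by rewrite mult_INR /=; field.
apply/Rmult_le_compat_l; first lra.
apply: le_fact_bound; rewrite ?muln_gt0 //; try lia.
by rewrite /P expn_digits; apply: unit_digits_prod_bound; rewrite -?expn_digits.
Qed.
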